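(* Let $\mathcal C$ be a convex arc with total curvature $\int_{\mathcal C}\kappa\,ds\le\pi$ whose radius of curvature satisfies $R_1\le\rho\le R_2$ at every point, for constants $0<R_1\le R_2$. Let $\mathcal L$ be a lattice in $\mathbb R^2$, let $L=\mathrm{Length}(\mathcal C)$, and let $\delta>0$ satisfy $$\delta<\frac{d_{\mathcal L}^2}{2\left(R_2+d_{\mathcal L}+\sqrt{(R_2+d_{\mathcal L})^2-d_{\mathcal L}^2}\right)}\quad\text{and}\quad \frac{A_{\mathcal L}}{2}-L\delta-\frac32\delta^2>0.$$ Then $$\#\{Q\in\mathcal L:\mathrm{dist}(\mathcal C,Q)<\delta\}<2+\frac{L}{\big(R_1(A_{\mathcal L}-2L\delta-3\delta^2)\big)^{1/3}}.$$
   Context: A lattice is a set $\mathcal L=\mathcal L(v_0,v_1,v_2)=\{v_0+mv_1+nv_2: m,n\in\mathbb Z\}$ where $v_0,v_1,v_2\in\mathbb R^2$ and $v_1,v_2$ are linearly independent; $A_{\mathcal L}=|\det(v_1,v_2)|$ and $d_{\mathcal L}=\min\{\|P-Q\|:P,Q\in\mathcal L,\ P\ne Q\}$. All curves are of class $C^2$ with nonvanishing first and second derivative vectors, oriented so that the curvature $\kappa$ is positive; a convex arc is such a non-closed curve lying on the boundary of a convex planar region. $\rho=1/\kappa$ is the radius of curvature, $s$ is arclength, and $\mathrm{dist}(\mathcal C,Q)$ is the Euclidean distance from $Q$ to the set $\mathcal C$. *)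

From Stdlib Require Import Reals Lra List.
From Coquelicot Require Import Coquelicot.
Open Scope R_scope.

Definition enorm2 (p : R * R) : R := sqrt (fst p ^ 2 + snd p ^ 2).
Definition edist2 (p q : R * R) : R := enorm2 (fst p - fst q, snd p - snd q).

Definition lattice_pt (v0 v1 v2 : R * R) (m n : Z) : R * R :=
  (fst v0 + IZR m * fst v1 + IZR n * fst v2,
   snd v0 + IZR m * snd v1 + IZR n * snd v2).

Definition in_lattice (v0 v1 v2 : R * R) (P : R * R) : Prop :=
  exists m n : Z, P = lattice_pt v0 v1 v2 m n.

Definition det2 (v1 v2 : R * R) : R := fst v1 * snd v2 - snd v1 * fst v2.

Definition lin_indep2 (v1 v2 : R * R) : Prop := det2 v1 v2 <> 0.

Definition lattice_area (v1 v2 : R * R) : R := Rabs (det2 v1 v2).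

Definition lattice_mindist (v0 v1 v2 : R * R) : R :=
  real (Glb_Rbar (fun r => exists P Q, in_lattice v0 v1 v2 P /\
                     in_lattice v0 v1 v2 Q /\ P <> Q /\ r = edist2 P Q)).

Definition is_C2_curve (gx gy dx dy ddx ddy : R -> R) : Prop :=
  forall t, is_derive gx t (dx t) /\ is_derive gy t (dy t) /\
            is_derive dx t (ddx t) /\ is_derive dy t (ddy t) /\
            continuous ddx t /\ continuous ddy t.

Definition speed (dx dy : R -> R) (t : R) : R := sqrt (dx t ^ 2 + dy t ^ 2).

Definition curvature (dx dy ddx ddy : R -> R) (t : R) : R :=
  (dx t * ddy t - dy t * ddx t) / (speed dx dy t ^ 3).

Definition convex_set (K : R * R -> Prop) : Prop :=
  forall p q l, K p -> K q -> 0 <= l <= 1 ->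
    K ((1 - l) * fst p + l * fst q, (1 - l) * snd p + l * snd q).

Definition on_boundary (K : R * R -> Prop) (p : R * R) : Prop :=
  forall e, 0 < e ->
    (exists q, edist2 p q < e /\ K q) /\ (exists q, edist2 p q < e /\ ~ K q).

(* A convex arc: a non-closed (simple) curve lying on the boundary of a
   convex planar region, with nonvanishing first and second derivative vectors and
   oriented so that the curvature is positive. *)
Definition convex_arc (a b : R) (gx gy dx dy ddx ddy : R -> R) : Prop :=
  a < b /\
  is_C2_curve gx gy dx dy ddx ddy /\
  (forall t, a <= t <= b -> (dx t, dy t) <> (0, 0)) /\
  (forall t, a <= t <= b -> (ddx t, ddy t) <> (0, 0)) /\
  (forall t, a <= t <= b -> 0 < curvature dx dy ddx ddy t) /\
  (forall s t, a <= s <= b -> a <= t <= b -> (gx s, gy s) = (gx t, gy t) -> s = t) /\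
  (exists K : R * R -> Prop, convex_set K /\
     forall t, a <= t <= b -> on_boundary K (gx t, gy t)).

Definition arc_length (a b : R) (dx dy : R -> R) : R := RInt (speed dx dy) a b.

Definition total_curvature (a b : R) (dx dy ddx ddy : R -> R) : R :=
  RInt (fun t => curvature dx dy ddx ddy t * speed dx dy t) a b.

Definition dist_curve (a b : R) (gx gy : R -> R) (Q : R * R) : R :=
  real (Glb_Rbar (fun r => exists t, a <= t <= b /\ r = edist2 (gx t, gy t) Q)).

(** Parametrize the arc by its tangent angle, which increases by at most [PI].
    Because [rho <= R2] and the total turn is at most [PI], the arc lies in the disk
    of radius [R2] tangent to it at any of its points (Blaschke's rolling disk).
    Because [rho >= R1], arc points with arclength parameters [s1 < s2 < s3] span a
    triangle of area at most [(s3 - s1)^3 / (16 R1)].  Three lattice points within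
    [delta] of the arc cannot be collinear: the middle one would lie near the
    boundary circle of such a disk and the outer ones at distance at least [d_L]
    beyond it along a chord.  So they span a triangle of area at least [A_L / 2],
    and moving its vertices onto the arc costs at most [L delta + 3 delta^2 / 2].
    Hence any three of the counted points have arclength parameters spread over at
    least [2 (R1 (A_L - 2 L delta - 3 delta^2))^(1/3)], which bounds their number. *)

From Stdlib Require Import Reals Lra List Psatz ZArith Classical ClassicalEpsilon.
From Coquelicot Require Import Coquelicot.
Open Scope R_scope.

(** * Calculus on the real line *)

(** Coquelicot states these rules over abstract normed modules, where [apply] does
    not unify [plus]/[minus]/[mult] with [Rplus]/[Rminus]/[Rmult]. *)

Lemma is_derive_plus_R (f g : R -> R) (x df dg : R) :
  is_derive f x df -> is_derive g x dg -> is_derive (fun t => f t + g t) x (df + dg).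
Proof. intros Hf Hg. exact (is_derive_plus f g x df dg Hf Hg). Qed.

Lemma is_derive_minus_R (f g : R -> R) (x df dg : R) :
  is_derive f x df -> is_derive g x dg -> is_derive (fun t => f t - g t) x (df - dg).
Proof. intros Hf Hg. exact (is_derive_minus f g x df dg Hf Hg). Qed.

Lemma is_derive_mult_R (f g : R -> R) (x df dg : R) :
  is_derive f x df -> is_derive g x dg ->
  is_derive (fun t => f t * g t) x (df * g x + f x * dg).
Proof. intros Hf Hg. exact (is_derive_mult f g x df dg Hf Hg Rmult_comm). Qed.

Lemma is_derive_const_R (c x : R) : is_derive (fun _ => c) x 0.
Proof. exact (is_derive_const (K := R_AbsRing) (V := R_NormedModule) c x). Qed.

Lemma is_derive_comp_R (f g : R -> R) (x df dg : R) :
  is_derive f (g x) df -> is_derive g x dg -> is_derive (fun t => f (g t)) x (df * dg).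
Proof.
  intros Hf Hg. rewrite Rmult_comm. exact (is_derive_comp f g x df dg Hf Hg).
Qed.

Lemma is_derive_value (f : R -> R) (x df df' : R) :
  df = df' -> is_derive f x df -> is_derive f x df'.
Proof. now intros <-. Qed.

Lemma is_derive_sq_R (f : R -> R) (x df : R) :
  is_derive f x df -> is_derive (fun t => f t ^ 2) x (2 * f x * df).
Proof.
  intros H. apply (is_derive_ext (fun t => f t * f t)); [intros; simpl; ring|].
  eapply is_derive_value; [|apply is_derive_mult_R; eauto]. ring.
Qed.

Lemma is_derive_lincomb2 (f g : R -> R) (p q c x df dg : R) :
  is_derive f x df -> is_derive g x dg ->
  is_derive (fun t => p * f t + q * g t + c) x (p * df + q * dg).
Proof.
  intros Hf Hg. eapply is_derive_value;
    [|apply is_derive_plus_R; [apply is_derive_plus_R; apply is_derive_scal; eauto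
                              |apply is_derive_const_R]].
  ring.
Qed.

Lemma continuous_of_is_derive (f : R -> R) (x df : R) : is_derive f x df -> continuous f x.
Proof. intros H. apply (ex_derive_continuous f). now exists df. Qed.

Lemma continuous_const_R (c x : R) : continuous (fun _ : R => c) x.
Proof. exact (continuous_const (U := R_UniformSpace) (V := R_UniformSpace) c x). Qed.

Lemma continuous_plus_R (f g : R -> R) (x : R) :
  continuous f x -> continuous g x -> continuous (fun t => f t + g t) x.
Proof. intros Hf Hg. exact (continuous_plus f g x Hf Hg). Qed.

Lemma continuous_minus_R (f g : R -> R) (x : R) :
  continuous f x -> continuous g x -> continuous (fun t => f t - g t) x.
Proof. intros Hf Hg. exact (continuous_minus f g x Hf Hg). Qed.

Lemma continuous_mult_R (f g : R -> R) (x : R) :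
  continuous f x -> continuous g x -> continuous (fun t => f t * g t) x.
Proof. intros Hf Hg. exact (continuous_mult f g x Hf Hg). Qed.

Lemma continuous_div_R (f g : R -> R) (x : R) :
  continuous f x -> continuous g x -> g x <> 0 -> continuous (fun t => f t / g t) x.
Proof.
  intros Hf Hg Hx. apply continuity_pt_filterlim.
  apply continuity_pt_div; [apply continuity_pt_filterlim..|]; auto.
Qed.

Lemma locally_of_open_interval (P : R -> Prop) (lo hi t : R) :
  lo < t < hi -> (forall y, lo < y < hi -> P y) -> locally t P.
Proof.
  intros Ht H.
  assert (He : 0 < Rmin (t - lo) (hi - t)) by (apply Rmin_glb_lt; lra).
  exists (mkposreal _ He). intros y Hy. apply H.
  change (Rabs (y - t) < Rmin (t - lo) (hi - t)) in Hy.
  pose proof (Rmin_l (t - lo) (hi - t)). pose proof (Rmin_r (t - lo) (hi - t)).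
  unfold Rabs in Hy; destruct (Rcase_abs _); lra.
Qed.

Lemma increment_le_of_derive_le (f g df dg : R -> R) (u v : R) :
  u <= v ->
  (forall x, u <= x <= v -> is_derive f x (df x)) ->
  (forall x, u <= x <= v -> is_derive g x (dg x)) ->
  (forall x, u <= x <= v -> df x <= dg x) ->
  f v - f u <= g v - g u.
Proof.
  intros Huv Hf Hg Hle.
  assert (Hd : forall x, u <= x <= v -> is_derive (fun x => g x - f x) x (dg x - df x))
    by (intros; apply is_derive_minus_R; auto).
  destruct (MVT_gen (fun x => g x - f x) u v (fun x => dg x - df x)) as [c [Hc He]];
    rewrite ?Rmin_left, ?Rmax_right in * by lra.
  - intros x Hx. apply Hd. lra.
  - intros x Hx. apply continuity_pt_filterlim, (continuous_of_is_derive _ _ _ (Hd x Hx)).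
  - specialize (Hle c Hc). nra.
Qed.

Lemma eq_of_derive_zero (f : R -> R) (u v : R) :
  u <= v -> (forall x, u <= x <= v -> is_derive f x 0) -> f v = f u.
Proof.
  intros Huv H.
  pose proof (increment_le_of_derive_le f (fun _ => 0) (fun _ => 0) (fun _ => 0) u v Huv H
    (fun x _ => is_derive_const_R 0 x) (fun _ _ => Rle_refl 0)).
  pose proof (increment_le_of_derive_le (fun _ => 0) f (fun _ => 0) (fun _ => 0) u v Huv
    (fun x _ => is_derive_const_R 0 x) H (fun _ _ => Rle_refl 0)).
  lra.
Qed.

Lemma sin_le_id x : 0 <= x -> sin x <= x.
Proof.
  intros Hx.
  pose proof (increment_le_of_derive_le sin (fun t => t) cos (fun _ => 1) 0 x Hx
    (fun t _ => is_derive_sin t) (fun t _ => is_derive_id (K := R_AbsRing) t)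
    (fun t _ => proj2 (COS_bound t))).
  rewrite sin_0 in H. lra.
Qed.

Lemma RInt_of_is_derive (F f : R -> R) (u v : R) :
  (forall x, is_derive F x (f x)) -> (forall x, continuous f x) -> RInt f u v = F v - F u.
Proof.
  intros HF Hf. apply is_RInt_unique.
  exact (is_RInt_derive F f u v (fun x _ => HF x) (fun x _ => Hf x)).
Qed.

Lemma is_derive_RInt_R (f : R -> R) (lo hi x0 x : R) :
  lo < x < hi -> (forall y, lo < y < hi -> continuous f y) -> lo < x0 < hi ->
  is_derive (fun y => RInt f x0 y) x (f x).
Proof.
  intros Hx Hf Hx0. apply (is_derive_RInt f _ x0 x); [|apply Hf; lra].
  apply (locally_of_open_interval _ lo hi x Hx). intros y Hy.
  apply (RInt_correct f x0 y), (ex_RInt_continuous (V := R_CompleteNormedModule)).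
  intros z Hz. apply Hf. unfold Rmin, Rmax in Hz; destruct (Rle_dec x0 y); lra.
Qed.

Lemma is_derive_RInt_continuous (f : R -> R) (x0 x : R) :
  (forall y, continuous f y) -> is_derive (fun y => RInt f x0 y) x (f x).
Proof.
  intros Hf. apply (is_derive_RInt_R f (Rmin x x0 - 1) (Rmax x x0 + 1)); auto.
  - pose proof (Rmin_l x x0). pose proof (Rmax_l x x0). lra.
  - pose proof (Rmin_r x x0). pose proof (Rmax_r x x0). lra.
Qed.

Definition pos_part (y : R) : R := (y + Rabs y) / 2.

Lemma pos_part_ge0 y : 0 <= pos_part y.
Proof. unfold pos_part, Rabs. destruct (Rcase_abs y); lra. Qed.

Lemma pos_part_id y : 0 <= y -> pos_part y = y.
Proof. intros; unfold pos_part; rewrite Rabs_right; lra. Qed.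

Lemma pos_part_eq0 y : y <= 0 -> pos_part y = 0.
Proof. intros; unfold pos_part; rewrite Rabs_left1; lra. Qed.

Lemma pos_part_ge y : y <= pos_part y.
Proof. unfold pos_part, Rabs. destruct (Rcase_abs y); lra. Qed.

Lemma continuous_pos_part (f : R -> R) x :
  continuous f x -> continuous (fun t => pos_part (f t)) x.
Proof.
  intros H. unfold pos_part.
  apply (continuous_ext (fun t => / 2 * (f t + Rabs (f t)))); [intros; simpl; field|].
  apply continuous_mult_R; [apply continuous_const_R|].
  apply continuous_plus_R; [exact H|exact (continuous_Rabs_comp f x H)].
Qed.

Section UnitDirection.

Variables n1 n2 : R.

Definition ndot (u : R) : R := n1 * cos u + n2 * sin u.
Definition ncross (u : R) : R := n1 * sin u - n2 * cos u.

Lemma is_derive_ncross x : is_derive ncross x (ndot x).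
Proof.
  unfold ncross, ndot. apply (is_derive_value _ _ (n1 * cos x - n2 * (- sin x))); [ring|].
  apply is_derive_minus_R; apply is_derive_scal; [apply is_derive_sin|apply is_derive_cos].
Qed.

Lemma continuous_ndot x : continuous ndot x.
Proof.
  unfold ndot. apply continuous_plus_R; apply continuous_mult_R;
    auto using continuous_const_R, continuous_cos_comp, continuous_sin_comp, continuous_id.
Qed.

Lemma continuous_pos_ndot x : continuous (fun u => pos_part (ndot u)) x.
Proof. apply continuous_pos_part, continuous_ndot. Qed.

Lemma ex_RInt_pos_ndot x y : ex_RInt (fun u => pos_part (ndot u)) x y.
Proof.
  apply (ex_RInt_continuous (V := R_CompleteNormedModule)). intros; apply continuous_pos_ndot.
Qed.

Lemma RInt_pos_ndot_ge0 x y : x <= y -> 0 <= RInt (fun u => pos_part (ndot u)) x y.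
Proof.
  intros H. apply RInt_ge_0; auto using ex_RInt_pos_ndot. intros; apply pos_part_ge0.
Qed.

Lemma RInt_pos_ndot_le x' x y y' : x' <= x -> x <= y -> y <= y' ->
  RInt (fun u => pos_part (ndot u)) x y <= RInt (fun u => pos_part (ndot u)) x' y'.
Proof.
  intros H1 H2 H3.
  rewrite <- (RInt_Chasles _ x' x y'), <- (RInt_Chasles _ x y y') by apply ex_RInt_pos_ndot.
  pose proof (RInt_pos_ndot_ge0 x' x H1). pose proof (RInt_pos_ndot_ge0 y y' H3).
  unfold plus; simpl. lra.
Qed.

Lemma ndot_rotate x0 u : ndot u = ndot x0 * cos (u - x0) - ncross x0 * sin (u - x0).
Proof.
  unfold ndot, ncross. rewrite cos_minus, sin_minus.
  pose proof (sin2_cos2 x0) as H. unfold Rsqr in H.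
  transitivity ((n1 * cos u + n2 * sin u) * (sin x0 * sin x0 + cos x0 * cos x0));
    [rewrite H|]; ring.
Qed.

Hypothesis n_unit : n1 ^ 2 + n2 ^ 2 = 1.

Lemma ndot_ncross_sq u : ndot u ^ 2 + ncross u ^ 2 = 1.
Proof.
  unfold ndot, ncross. pose proof (sin2_cos2 u) as H. unfold Rsqr in H.
  transitivity ((n1 ^ 2 + n2 ^ 2) * (sin u * sin u + cos u * cos u)); [ring|].
  rewrite H, n_unit. ring.
Qed.

(** On a half turn [ndot] vanishes at a single point [x0] where [ncross x0 = 1] or [-1],
    so its positive part integrates to [1 - ncross x] or to [0]. *)
Lemma RInt_pos_ndot_half_turn x :
  RInt (fun u => pos_part (ndot u)) x (x + PI) <= 1 - ncross x.
Proof.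
  pose proof PI_RGT_0.
  assert (Hend : ndot (x + PI) = - ndot x) by (unfold ndot; rewrite neg_cos, neg_sin; ring).
  destruct (IVT_gen_consistent ndot x (x + PI) 0 continuous_ndot) as [x0 [Hx0 Hz]].
  { rewrite Hend. unfold Rmin, Rmax; destruct (Rle_dec _ _); lra. }
  rewrite Rmin_left, Rmax_right in Hx0 by lra.
  assert (Hc : ncross x0 = 1 \/ ncross x0 = -1)
    by (pose proof (ndot_ncross_sq x0); rewrite Hz in *; nra).
  assert (Hsin1 : forall u, x <= u <= x0 -> sin (u - x0) <= 0).
  { intros u Hu. replace (u - x0) with (- (x0 - u)) by ring. rewrite sin_neg.
    assert (0 <= sin (x0 - u)) by (apply sin_ge_0; lra). lra. }
  assert (Hsin2 : forall u, x0 <= u <= x + PI -> 0 <= sin (u - x0))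
    by (intros; apply sin_ge_0; lra).
  assert (Hrot : forall u, ndot u = - ncross x0 * sin (u - x0))
    by (intros u; rewrite (ndot_rotate x0), Hz; ring).
  assert (Hncross : forall u v, RInt ndot u v = ncross v - ncross u)
    by (intros; apply RInt_of_is_derive; [apply is_derive_ncross|apply continuous_ndot]).
  rewrite <- (RInt_Chasles _ x x0 (x + PI)) by apply ex_RInt_pos_ndot.
  unfold plus; simpl.
  destruct Hc as [Hc|Hc].
  - rewrite (RInt_ext _ ndot x x0), (RInt_ext _ (fun _ => 0) x0 (x + PI)).
    + rewrite RInt_const, Hncross, Hc. unfold scal; simpl; unfold mult; simpl. lra.
    + rewrite Rmin_left, Rmax_right by lra. intros u Hu.
      apply pos_part_eq0. rewrite Hrot, Hc. specialize (Hsin2 u). lra.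
    + rewrite Rmin_left, Rmax_right by lra. intros u Hu.
      apply pos_part_id. rewrite Hrot, Hc. specialize (Hsin1 u). lra.
  - rewrite (RInt_ext _ (fun _ => 0) x x0), (RInt_ext _ ndot x0 (x + PI)).
    + rewrite RInt_const, Hncross, Hc. unfold scal; simpl; unfold mult; simpl.
      assert (ncross (x + PI) = - ncross x) by (unfold ncross; rewrite neg_cos, neg_sin; ring).
      lra.
    + rewrite Rmin_left, Rmax_right by lra. intros u Hu.
      apply pos_part_id. rewrite Hrot, Hc. specialize (Hsin2 u). lra.
    + rewrite Rmin_left, Rmax_right by lra. intros u Hu.
      apply pos_part_eq0. rewrite Hrot, Hc. specialize (Hsin1 u). lra.
Qed.

End UnitDirection.

(** * Plane geometry and lattices *)

Lemma sqnorm_le_of_dot_le (v1 v2 M : R) :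
  (forall n1 n2, n1 ^ 2 + n2 ^ 2 = 1 -> v1 * n1 + v2 * n2 <= M) ->
  v1 ^ 2 + v2 ^ 2 <= M ^ 2.
Proof.
  intros H.
  destruct (Req_dec (v1 ^ 2 + v2 ^ 2) 0) as [E|E]; [rewrite E; apply pow2_ge_0|].
  assert (Hp : 0 < v1 ^ 2 + v2 ^ 2) by nra.
  set (r := sqrt (v1 ^ 2 + v2 ^ 2)).
  assert (Hr : 0 < r) by (apply sqrt_lt_R0; auto).
  assert (Hr2 : r ^ 2 = v1 ^ 2 + v2 ^ 2) by (apply pow2_sqrt; lra).
  specialize (H (v1 / r) (v2 / r)).
  assert (v1 * (v1 / r) + v2 * (v2 / r) = r) by (field_simplify; [rewrite <- Hr2; field|]; lra).
  assert ((v1 / r) ^ 2 + (v2 / r) ^ 2 = 1) by (field_simplify; [rewrite <- Hr2; field|]; lra).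
  rewrite <- Hr2. apply pow_incr. lra.
Qed.

Definition sqdist (p q : R * R) : R := (fst p - fst q) ^ 2 + (snd p - snd q) ^ 2.

Lemma sqdist_ge0 p q : 0 <= sqdist p q.
Proof. unfold sqdist. pose proof (pow2_ge_0 (fst p - fst q)). pose proof (pow2_ge_0 (snd p - snd q)). lra. Qed.

Lemma sqdist_sym p q : sqdist p q = sqdist q p.
Proof. unfold sqdist. ring. Qed.

Lemma sqdist_pos p q : p <> q -> 0 < sqdist p q.
Proof.
  intros H. destruct p as [p1 p2], q as [q1 q2]. unfold sqdist; simpl.
  destruct (Req_dec (p1 - q1) 0), (Req_dec (p2 - q2) 0); try nra.
  exfalso. apply H. f_equal; lra.
Qed.

Lemma edist2_sqdist p q : edist2 p q = sqrt (sqdist p q).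
Proof. reflexivity. Qed.

Lemma edist2_ge0 p q : 0 <= edist2 p q.
Proof. apply sqrt_pos. Qed.

Lemma edist2_sym p q : edist2 p q = edist2 q p.
Proof. rewrite !edist2_sqdist, sqdist_sym. reflexivity. Qed.

Lemma edist2_sq p q : edist2 p q ^ 2 = sqdist p q.
Proof. apply pow2_sqrt, sqdist_ge0. Qed.

Lemma sqdist_lt_of_edist2_lt p q e : edist2 p q < e -> sqdist p q < e ^ 2.
Proof. intros H. rewrite <- edist2_sq. pose proof (edist2_ge0 p q). nra. Qed.

Lemma edist2_le_of_sqdist_le p q e : 0 <= e -> sqdist p q <= e ^ 2 -> edist2 p q <= e.
Proof.
  intros He H. rewrite edist2_sqdist, <- (sqrt_pow2 e He). apply sqrt_le_1_alt, H.
Qed.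

Lemma edist2_triangle p q r : edist2 p r <= edist2 p q + edist2 q r.
Proof.
  apply edist2_le_of_sqdist_le; [pose proof (edist2_ge0 p q); pose proof (edist2_ge0 q r); lra|].
  pose proof (edist2_sq p q) as Hpq. pose proof (edist2_sq q r) as Hqr.
  pose proof (edist2_ge0 p q). pose proof (edist2_ge0 q r).
  destruct p as [p1 p2], q as [q1 q2], r as [r1 r2]. unfold sqdist in *; cbn [fst snd] in *.
  set (X := edist2 (p1, p2) (q1, q2)) in *. set (Y := edist2 (q1, q2) (r1, r2)) in *.
  assert (CS : (p1 - q1) * (q1 - r1) + (p2 - q2) * (q2 - r2) <= X * Y).
  { assert (((p1 - q1) * (q1 - r1) + (p2 - q2) * (q2 - r2)) ^ 2 <= (X * Y) ^ 2).
    { replace ((X * Y) ^ 2) with (X ^ 2 * Y ^ 2) by ring. rewrite Hpq, Hqr.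
      set (c := (p1 - q1) * (q2 - r2) - (p2 - q2) * (q1 - r1)).
      match goal with |- ?l <= ?r => assert (r = l + c ^ 2) by (unfold c; ring) end.
      pose proof (pow2_ge_0 c). lra. }
    assert (0 <= X * Y) by (apply Rmult_le_pos; auto). nra. }
  replace ((p1 - r1) ^ 2 + (p2 - r2) ^ 2) with (((p1 - q1) ^ 2 + (p2 - q2) ^ 2)
    + ((q1 - r1) ^ 2 + (q2 - r2) ^ 2) + 2 * ((p1 - q1) * (q1 - r1) + (p2 - q2) * (q2 - r2)))
    by ring.
  rewrite <- Hpq, <- Hqr. replace ((X + Y) ^ 2) with (X ^ 2 + Y ^ 2 + 2 * (X * Y)) by ring. lra.
Qed.

(** Twice the signed area of the triangle [P1 P2 P3]. *)
Definition cross3 (P1 P2 P3 : R * R) : R :=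
  (fst P2 - fst P1) * (snd P3 - snd P2) - (snd P2 - snd P1) * (fst P3 - fst P2).

Lemma Rabs_cross_le (e1 e2 w1 w2 dl : R) :
  e1 ^ 2 + e2 ^ 2 <= dl ^ 2 -> 0 <= dl ->
  Rabs (e1 * w2 - e2 * w1) <= dl * sqrt (w1 ^ 2 + w2 ^ 2).
Proof.
  intros H Hd.
  assert (Hw : 0 <= w1 ^ 2 + w2 ^ 2) by nra.
  pose proof (sqrt_pos (w1 ^ 2 + w2 ^ 2)) as S.
  pose proof (pow2_sqrt _ Hw) as S2.
  apply Rsqr_incr_0_var; [|apply Rmult_le_pos; auto].
  rewrite <- Rsqr_abs, !Rsqr_pow2, Rpow_mult_distr, S2.
  pose proof (pow2_ge_0 (e1 * w1 + e2 * w2)). nra.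
Qed.

(** A weak form of Weitzenboeck's inequality for the triangle with sides [u], [w], [u - w]. *)
Lemma weitzenboeck_weak (u1 u2 w1 w2 : R) :
  3 * Rabs (u1 * w2 - u2 * w1) <=
  (u1 ^ 2 + u2 ^ 2) + (w1 ^ 2 + w2 ^ 2) + ((u1 - w1) ^ 2 + (u2 - w2) ^ 2).
Proof.
  pose proof (pow2_ge_0 (w1 - (u1 - 3/2 * u2) / 2)).
  pose proof (pow2_ge_0 (w2 - (3/2 * u1 + u2) / 2)).
  pose proof (pow2_ge_0 (w1 - (u1 + 3/2 * u2) / 2)).
  pose proof (pow2_ge_0 (w2 - (- 3/2 * u1 + u2) / 2)).
  unfold Rabs; destruct (Rcase_abs _); nra.
Qed.

Lemma cross3_perturb (P1 P2 P3 Q1 Q2 Q3 : R * R) (dl : R) :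
  sqdist Q1 P1 <= dl ^ 2 -> sqdist Q2 P2 <= dl ^ 2 -> sqdist Q3 P3 <= dl ^ 2 -> 0 <= dl ->
  Rabs (cross3 Q1 Q2 Q3 - cross3 P1 P2 P3)
  <= dl * (edist2 P2 P3 + edist2 P3 P1 + edist2 P1 P2) + 3 * dl ^ 2.
Proof.
  destruct P1 as [p1 q1], P2 as [p2 q2], P3 as [p3 q3].
  destruct Q1 as [x1 y1], Q2 as [x2 y2], Q3 as [x3 y3].
  unfold sqdist, cross3, edist2, enorm2; cbn [fst snd]. intros H1 H2 H3 Hd.
  set (e1 := x1 - p1) in *. set (f1 := y1 - q1) in *.
  set (e2 := x2 - p2) in *. set (f2 := y2 - q2) in *.
  set (e3 := x3 - p3) in *. set (f3 := y3 - q3) in *.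
  pose proof (Rabs_cross_le e1 f1 (p2 - p3) (q2 - q3) dl H1 Hd) as C1.
  pose proof (Rabs_cross_le e2 f2 (p3 - p1) (q3 - q1) dl H2 Hd) as C2.
  pose proof (Rabs_cross_le e3 f3 (p1 - p2) (q1 - q2) dl H3 Hd) as C3.
  pose proof (weitzenboeck_weak (e2 - e1) (f2 - f1) (e3 - e1) (f3 - f1)) as W.
  assert (S : (e2 - e1) ^ 2 + (f2 - f1) ^ 2 + ((e3 - e1) ^ 2 + (f3 - f1) ^ 2) +
              ((e2 - e1 - (e3 - e1)) ^ 2 + (f2 - f1 - (f3 - f1)) ^ 2) <= 9 * dl ^ 2).
  { pose proof (pow2_ge_0 (e1 + e2 + e3)). pose proof (pow2_ge_0 (f1 + f2 + f3)). nra. }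
  replace ((x2 - x1) * (y3 - y2) - (y2 - y1) * (x3 - x2) - ((p2 - p1) * (q3 - q2) - (q2 - q1) * (p3 - p2)))
    with ((e1 * (q2 - q3) - f1 * (p2 - p3)) + (e2 * (q3 - q1) - f2 * (p3 - p1))
          + (e3 * (q1 - q2) - f3 * (p1 - p2)) + ((e2 - e1) * (f3 - f1) - (f2 - f1) * (e3 - e1)))
    by (unfold e1, f1, e2, f2, e3, f3; ring).
  eapply Rle_trans; [apply Rabs_triang|].
  eapply Rle_trans; [apply Rplus_le_compat_r; eapply Rle_trans;
    [apply Rabs_triang|apply Rplus_le_compat_r, Rabs_triang]|].
  lra.
Qed.

Lemma parallel_of_cross_zero (u1 u2 w1 w2 : R) :
  0 < u1 ^ 2 + u2 ^ 2 -> u1 * w2 - u2 * w1 = 0 -> exists lam, w1 = lam * u1 /\ w2 = lam * u2.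
Proof.
  intros Hu Hc. exists ((w1 * u1 + w2 * u2) / (u1 ^ 2 + u2 ^ 2)).
  assert (E1 : w1 * (u1 ^ 2 + u2 ^ 2) - (w1 * u1 + w2 * u2) * u1 = - u2 * (u1 * w2 - u2 * w1))
    by ring.
  assert (E2 : w2 * (u1 ^ 2 + u2 ^ 2) - (w1 * u1 + w2 * u2) * u2 = u1 * (u1 * w2 - u2 * w1))
    by ring.
  rewrite Hc in E1, E2. split; field_simplify_eq; lra.
Qed.

Definition strictly_between (E M F : R * R) : Prop :=
  exists l, 0 < l < 1 /\ fst M = (1 - l) * fst E + l * fst F /\
                         snd M = (1 - l) * snd E + l * snd F.

Lemma collinear_strictly_between (P1 P2 P3 : R * R) :
  P1 <> P2 -> P2 <> P3 -> P1 <> P3 -> cross3 P1 P2 P3 = 0 ->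
  strictly_between P2 P1 P3 \/ strictly_between P1 P2 P3 \/ strictly_between P1 P3 P2.
Proof.
  intros N12 N23 N13 Hc.
  pose proof (sqdist_pos _ _ N12) as Hu.
  destruct P1 as [x1 y1], P2 as [x2 y2], P3 as [x3 y3].
  unfold sqdist, cross3, strictly_between in *; cbn [fst snd] in *.
  destruct (parallel_of_cross_zero (x2 - x1) (y2 - y1) (x3 - x2) (y3 - y2)) as [lam [W1 W2]];
    [nra|lra|].
  assert (Hlam : lam <> 0) by (intros E; rewrite E in W1, W2; apply N23; f_equal; lra).
  destruct (Rlt_le_dec 0 lam) as [Lp|Ln]; [|destruct (Rlt_le_dec 0 (1 + lam)) as [Lp1|Ln1]].
  - right; left. exists (1 / (1 + lam)).
    assert (1 / (1 + lam) * (1 + lam) = 1) by (field; lra).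
    assert (0 < 1 / (1 + lam)) by (apply Rdiv_lt_0_compat; lra).
    repeat split; [lra|nra|field_simplify_eq; lra..].
  - right; right. exists (1 + lam). repeat split; lra.
  - destruct (Req_dec (1 + lam) 0) as [Z1|Z1].
    + exfalso. apply N13. f_equal; nra.
    + left. exists (- / lam).
      assert (- / lam * - lam = 1) by (field; lra).
      assert (0 < - / lam) by (apply Ropp_0_gt_lt_contravar, Rinv_lt_0_compat; lra).
      repeat split; [lra|nra|field_simplify_eq; lra..].
Qed.

Lemma strictly_between_obtuse (E M F c : R * R) : strictly_between E M F ->
  sqdist M c + sqdist E M <= sqdist E c \/ sqdist M c + sqdist F M <= sqdist F c.
Proof.
  intros [l [Hl [H1 H2]]].
  destruct E as [e1 e2], M as [m1 m2], F as [f1 f2], c as [c1 c2].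
  unfold sqdist; cbn [fst snd] in *. subst m1 m2.
  set (dot := ((1 - l) * e1 + l * f1 - c1) * (e1 - f1) + ((1 - l) * e2 + l * f2 - c2) * (e2 - f2)).
  destruct (Rle_dec 0 dot) as [Hd|Hd]; [left|right].
  - match goal with |- ?x <= ?y => assert (y - x = 2 * l * dot) by (unfold dot; ring) end.
    assert (0 <= 2 * l * dot) by (apply Rmult_le_pos; lra). lra.
  - match goal with |- ?x <= ?y => assert (y - x = - 2 * (1 - l) * dot) by (unfold dot; ring) end.
    assert (0 <= 2 * (1 - l) * - dot) by (apply Rmult_le_pos; lra). lra.
Qed.

Lemma near_circle_absurd (R dl d m x : R) :
  0 <= R -> 0 < dl -> 0 <= d -> 4 * R * dl + 2 * d * dl < d ^ 2 ->
  R - dl < m -> 0 <= m -> m ^ 2 + d ^ 2 <= x -> x < (R + dl) ^ 2 -> False.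
Proof.
  intros HR Hdl Hd Hsmall Hm Hm0 Hx HxR.
  destruct (Rle_dec dl R).
  - assert ((R - dl) ^ 2 <= m ^ 2) by (apply pow_incr; lra). nra.
  - assert (d < 2 * dl) by nra. nra.
Qed.

Lemma lattice_cross3 (v0 v1 v2 : R * R) (m1 n1 m2 n2 m3 n3 : Z) :
  cross3 (lattice_pt v0 v1 v2 m1 n1) (lattice_pt v0 v1 v2 m2 n2) (lattice_pt v0 v1 v2 m3 n3) =
  IZR ((m2 - m1) * (n3 - n2) - (n2 - n1) * (m3 - m2)) * det2 v1 v2.
Proof. unfold cross3, lattice_pt, det2; cbn [fst snd]. rewrite minus_IZR, !mult_IZR, !minus_IZR. ring. Qed.

Lemma lattice_cross3_cases (v0 v1 v2 Q1 Q2 Q3 : R * R) :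
  in_lattice v0 v1 v2 Q1 -> in_lattice v0 v1 v2 Q2 -> in_lattice v0 v1 v2 Q3 ->
  cross3 Q1 Q2 Q3 = 0 \/ lattice_area v1 v2 <= Rabs (cross3 Q1 Q2 Q3).
Proof.
  intros [m1 [n1 ->]] [m2 [n2 ->]] [m3 [n3 ->]]. rewrite lattice_cross3.
  set (z := ((m2 - m1) * (n3 - n2) - (n2 - n1) * (m3 - m2))%Z).
  destruct (Z.eq_dec z 0) as [Z0|Z0]; [left; rewrite Z0; ring|right].
  rewrite Rabs_mult, Rabs_Zabs. unfold lattice_area.
  assert (1 <= IZR (Z.abs z)) by (apply IZR_le; lia).
  pose proof (Rabs_pos (det2 v1 v2)). nra.
Qed.

Lemma near_same_point_eq (P Q z : R * R) (dl d : R) :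
  (P <> Q -> d <= edist2 P Q) -> 2 * dl <= d ->
  edist2 z P < dl -> edist2 z Q < dl -> P = Q.
Proof.
  intros Hd Hdl HP HQ. apply NNPP. intros Hne.
  pose proof (edist2_triangle P z Q). rewrite (edist2_sym P z) in *.
  specialize (Hd Hne). lra.
Qed.

(** * Counting points whose triples are spread out *)

Lemma length_remove_NoDup (l : list R) x :
  NoDup l -> In x l -> S (length (remove Req_EM_T x l)) = length l.
Proof.
  induction l as [|y l IH]; intros Hn Hi; [destruct Hi|].
  inversion Hn; subst. simpl. destruct (Req_EM_T x y) as [E|E].
  - subst. rewrite notin_remove by auto. reflexivity.
  - simpl. destruct Hi as [Hi|Hi]; [congruence|]. rewrite IH; auto.
Qed.

Lemma NoDup_remove_R (l : list R) x : NoDup l -> NoDup (remove Req_EM_T x l).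
Proof.
  induction l as [|y l IH]; intros Hn; [constructor|].
  inversion Hn; subst. simpl. destruct (Req_EM_T x y); auto.
  constructor; auto. intros Hi. apply in_remove in Hi. tauto.
Qed.

Lemma exists_min_In (l : list R) : l <> nil -> exists m, In m l /\ forall y, In y l -> m <= y.
Proof.
  induction l as [|x l IH]; intros Hl; [congruence|].
  destruct l as [|z l'].
  - exists x. split; [left; auto|]. intros y [Hy|[]]. subst; lra.
  - destruct IH as [m [Hm1 Hm2]]; [discriminate|].
    destruct (Rle_dec x m).
    + exists x. split; [left; auto|]. intros y [Hy|Hy]; [subst; lra|]. specialize (Hm2 y Hy). lra.
    + exists m. split; [right; auto|]. intros y [Hy|Hy]; [subst; lra|auto].
Qed.

Lemma remove_min (l : list R) : NoDup l -> l <> nil ->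
  exists m l', In m l /\ NoDup l' /\ S (length l') = length l /\
    (forall y, In y l' -> In y l /\ m < y) /\ (forall y, In y l -> m <= y).
Proof.
  intros Hn Hl. destruct (exists_min_In l Hl) as [m [Hm Hmin]].
  exists m, (remove Req_EM_T m l).
  split; [|split; [|split; [|split]]]; auto using NoDup_remove_R, length_remove_NoDup.
  intros y Hy. apply in_remove in Hy. destruct Hy as [Hy Hne]. specialize (Hmin y Hy).
  split; [auto|lra].
Qed.

Section TripleSpread.

Variables (X hi : R).
Hypothesis X_pos : 0 < X.

Definition triple_spread (l : list R) : Prop :=
  forall x y z, In x l -> In y l -> In z l -> x < y -> y < z -> 2 * X <= z - x.

Lemma triple_spread_incl (l l' : list R) :
  (forall y, In y l' -> In y l) -> triple_spread l -> triple_spread l'.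
Proof. intros Hsub H x y z Hx Hy Hz. apply H; auto. Qed.

(** Peel off the two smallest points: together with any third point they span [2 X]. *)
Lemma triple_spread_length_aux (n : nat) : forall (l : list R) (lo : R),
  (length l <= n)%nat -> (2 <= length l)%nat -> NoDup l ->
  (forall x, In x l -> lo <= x <= hi) -> triple_spread l ->
  (INR (length l) - 2) * X < hi - lo.
Proof.
  induction n as [|n IH]; intros l lo Hn H2 Hnd Hin Hsp; [lia|].
  destruct (remove_min l Hnd) as [m [l1 [Hm [Hnd1 [L1 [Hl1 Hmin]]]]]];
    [intros ->; simpl in H2; lia|].
  destruct (remove_min l1 Hnd1) as [m' [l2 [Hm' [Hnd2 [L2 [Hl2 _]]]]]];
    [intros ->; simpl in L1; lia|].
  destruct (Hl1 m' Hm') as [Hm'l Hmm'].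
  assert (Hin2 : forall z, In z l2 -> In z l /\ m' < z)
    by (intros z Hz; destruct (Hl2 z Hz) as [Hz1 ?]; split; [apply Hl1|]; auto).
  assert (Hspan : forall z, In z l2 -> 2 * X <= z - m)
    by (intros z Hz; destruct (Hin2 z Hz); apply (Hsp m m' z); auto).
  destruct (Hin m Hm) as [Hlo _]. destruct (Hin m' Hm'l) as [_ Hhi'].
  destruct l2 as [|z0 l2'].
  - assert (Hlen : length l = 2%nat) by (simpl in *; lia). rewrite Hlen. simpl. lra.
  - destruct (remove_min (z0 :: l2') Hnd2) as [z [l3 [Hz [_ [L3 [_ Hzmin]]]]]]; [discriminate|].
    destruct (Hin2 z Hz) as [Hzl _]. destruct (Hin z Hzl) as [_ Hzhi].
    pose proof (Hspan z Hz).
    destruct l3 as [|w l3'].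
    + assert (Hlen : length l = 3%nat) by (simpl in *; lia). rewrite Hlen. simpl. lra.
    + assert (IH2 := IH (z0 :: l2') z ltac:(lia) ltac:(simpl in *; lia) Hnd2).
      assert (Hlen : length l = (length (z0 :: l2') + 2)%nat) by (simpl in *; lia).
      rewrite Hlen, plus_INR. simpl (INR 2).
      assert (IH2' : (INR (length (z0 :: l2')) - 2) * X < hi - z).
      { apply IH2.
        - intros x Hx. split; [auto|]. apply Hin, Hin2, Hx.
        - apply (triple_spread_incl l); [intros; apply Hin2|]; auto. }
      lra.
Qed.

Lemma length_lt_of_triple_spread (l : list R) (lo : R) :
  lo <= hi -> NoDup l -> (forall x, In x l -> lo <= x <= hi) -> triple_spread l ->
  INR (length l) < 2 + (hi - lo) / X.
Proof.
  intros Hlh Hnd Hin Hsp.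
  assert (0 <= (hi - lo) / X) by (apply Rmult_le_pos; [lra|left; apply Rinv_0_lt_compat; auto]).
  destruct (Compare_dec.le_lt_dec 2 (length l)) as [H2|H2].
  - pose proof (triple_spread_length_aux (length l) l lo (le_n _) H2 Hnd Hin Hsp) as Hb.
    apply (Rmult_lt_compat_r (/ X)) in Hb; [|apply Rinv_0_lt_compat; auto].
    rewrite Rmult_assoc, Rinv_r in Hb by lra. unfold Rdiv. lra.
  - assert (INR (length l) <= 1) by (change 1 with (INR 1); apply le_INR; lia). lra.
Qed.

End TripleSpread.

Lemma Rpower_third_cube (x : R) : 0 < x -> Rpower x (1 / 3) ^ 3 = x.
Proof.
  intros Hx. rewrite <- Rpower_pow by (unfold Rpower; apply exp_pos). rewrite Rpower_mult.
  replace (1 / 3 * INR 3) with 1 by (simpl; field). apply Rpower_1, Hx.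
Qed.

Lemma le_of_cube_le (x y : R) : 0 < x -> 0 <= y -> x ^ 3 <= y ^ 3 -> x <= y.
Proof.
  intros Hx Hy H. destruct (Rle_dec x y) as [|Hyx]; [auto|].
  assert (Hf : x ^ 3 - y ^ 3 = (x - y) * (x ^ 2 + x * y + y ^ 2)) by ring.
  assert (0 < x ^ 2 + x * y + y ^ 2) by nra.
  assert (0 < (x - y) * (x ^ 2 + x * y + y ^ 2)) by (apply Rmult_lt_0_compat; lra). lra.
Qed.

(** * Arcs with bounded radius of curvature *)

Definition angle_of (c s : R) : R := if Rle_dec 0 s then acos c else - acos c.

Lemma cos_sin_angle_of (c s : R) :
  c ^ 2 + s ^ 2 = 1 -> cos (angle_of c s) = c /\ sin (angle_of c s) = s.
Proof.
  intros Hu.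
  assert (HB : -1 <= c <= 1) by nra.
  assert (HS : sqrt (1 - c²) = Rabs s)
    by (replace (1 - c²) with (s²) by (unfold Rsqr; nra); apply sqrt_Rsqr_abs).
  unfold angle_of. destruct (Rle_dec 0 s).
  - rewrite cos_acos, sin_acos, HS, Rabs_right by lra. auto.
  - rewrite cos_neg, sin_neg, cos_acos, sin_acos, HS, Rabs_left by lra. split; [auto|ring].
Qed.

Lemma four_mul_le_cube (s t : R) : 0 <= s -> 0 <= t -> 4 * (s * t * (s + t)) <= (s + t) ^ 3.
Proof. intros. pose proof (pow2_ge_0 (s - t)). nra. Qed.

Section PlaneCurve.

Variables (a b a0 b0 : R) (gx gy dx dy ddx ddy : R -> R).
Hypothesis a0_lt_a : a0 < a.
Hypothesis a_lt_b : a < b.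
Hypothesis b_lt_b0 : b < b0.
Hypothesis curve_C2 : is_C2_curve gx gy dx dy ddx ddy.
Hypothesis regular : forall t, a0 < t < b0 -> 0 < dx t ^ 2 + dy t ^ 2.

Definition arc_pt (t : R) : R * R := (gx t, gy t).

Definition turning_rate (t : R) : R := (dx t * ddy t - dy t * ddx t) / (dx t ^ 2 + dy t ^ 2).
Definition utan_x (t : R) : R := dx t / speed dx dy t.
Definition utan_y (t : R) : R := dy t / speed dx dy t.
Definition tangent_angle (t : R) : R :=
  angle_of (utan_x a) (utan_y a) + RInt turning_rate a t.
Definition arclen (t : R) : R := RInt (speed dx dy) a t.

Lemma speed_pos t : a0 < t < b0 -> 0 < speed dx dy t.
Proof. intros. apply sqrt_lt_R0, regular; auto. Qed.

Lemma speed_sq t : speed dx dy t ^ 2 = dx t ^ 2 + dy t ^ 2.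
Proof. apply pow2_sqrt. nra. Qed.

Lemma is_derive_gx t : is_derive gx t (dx t).
Proof. apply curve_C2. Qed.

Lemma is_derive_gy t : is_derive gy t (dy t).
Proof. apply curve_C2. Qed.

Lemma is_derive_speed_sq t : is_derive (fun t => dx t ^ 2 + dy t ^ 2) t
  (2 * (dx t * ddx t + dy t * ddy t)).
Proof.
  destruct (curve_C2 t) as [_ [_ [Hx [Hy _]]]].
  eapply is_derive_value; [|apply is_derive_plus_R; apply is_derive_sq_R; eauto]. ring.
Qed.

Lemma is_derive_speed t : a0 < t < b0 ->
  is_derive (speed dx dy) t ((dx t * ddx t + dy t * ddy t) / speed dx dy t).
Proof.
  intros Ht. pose proof (speed_pos t Ht).
  eapply is_derive_value; [|exact (is_derive_sqrt _ t _ (is_derive_speed_sq t) (regular t Ht))].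
  unfold speed in *. field. lra.
Qed.

Lemma continuous_dx t : continuous dx t.
Proof. destruct (curve_C2 t) as [_ [_ [H _]]]. exact (continuous_of_is_derive _ _ _ H). Qed.

Lemma continuous_dy t : continuous dy t.
Proof. destruct (curve_C2 t) as [_ [_ [_ [H _]]]]. exact (continuous_of_is_derive _ _ _ H). Qed.

Lemma continuous_speed t : a0 < t < b0 -> continuous (speed dx dy) t.
Proof. intros Ht. exact (continuous_of_is_derive _ _ _ (is_derive_speed t Ht)). Qed.

Lemma continuous_turning_rate t : a0 < t < b0 -> continuous turning_rate t.
Proof.
  intros Ht. destruct (curve_C2 t) as [_ [_ [_ [_ [Hxx Hyy]]]]].
  apply continuous_div_R.
  - apply continuous_minus_R; apply continuous_mult_R; auto using continuous_dx, continuous_dy.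
  - exact (continuous_of_is_derive _ _ _ (is_derive_speed_sq t)).
  - apply Rgt_not_eq, regular, Ht.
Qed.

Lemma is_derive_tangent_angle t : a0 < t < b0 -> is_derive tangent_angle t (turning_rate t).
Proof.
  intros Ht. unfold tangent_angle. eapply is_derive_value; [|apply is_derive_plus_R;
    [apply is_derive_const_R|apply (is_derive_RInt_R _ a0 b0); auto using continuous_turning_rate]].
  - ring.
  - lra.
Qed.

Lemma is_derive_arclen t : a0 < t < b0 -> is_derive arclen t (speed dx dy t).
Proof.
  intros Ht. apply (is_derive_RInt_R _ a0 b0); auto using continuous_speed. lra.
Qed.

Lemma is_derive_utan_x t : a0 < t < b0 -> is_derive utan_x t (- turning_rate t * utan_y t).
Proof.
  intros Ht. pose proof (speed_pos t Ht). pose proof (speed_sq t).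
  destruct (curve_C2 t) as [_ [_ [H1 _]]].
  eapply is_derive_value; [|apply (is_derive_div dx _ t _ _ H1 (is_derive_speed t Ht)); lra].
  unfold turning_rate, utan_y. rewrite <- H0. field_simplify; [|lra|lra].
  rewrite H0; f_equal; ring.
Qed.

Lemma is_derive_utan_y t : a0 < t < b0 -> is_derive utan_y t (turning_rate t * utan_x t).
Proof.
  intros Ht. pose proof (speed_pos t Ht). pose proof (speed_sq t).
  destruct (curve_C2 t) as [_ [_ [_ [H2 _]]]].
  eapply is_derive_value; [|apply (is_derive_div dy _ t _ _ H2 (is_derive_speed t Ht)); lra].
  unfold turning_rate, utan_x. rewrite <- H0. field_simplify; [|lra|lra].
  rewrite H0; f_equal; ring.
Qed.

Lemma utan_sq t : a0 < t < b0 -> utan_x t ^ 2 + utan_y t ^ 2 = 1.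
Proof.
  intros Ht. pose proof (speed_pos t Ht). pose proof (speed_sq t).
  unfold utan_x, utan_y. field_simplify; [|lra]. rewrite H0. field. nra.
Qed.

(** The squared distance between the unit tangent and [(cos, sin)] of the tangent
    angle has derivative [0] and vanishes at [a]. *)
Lemma utan_polar t : a0 < t < b0 ->
  utan_x t = cos (tangent_angle t) /\ utan_y t = sin (tangent_angle t).
Proof.
  intros Ht.
  set (h := fun s => (utan_x s - cos (tangent_angle s)) ^ 2 + (utan_y s - sin (tangent_angle s)) ^ 2).
  assert (Hd : forall s, a0 < s < b0 -> is_derive h s 0).
  { intros s Hs. unfold h.
    assert (Hc := is_derive_comp_R _ _ s _ _ (is_derive_cos (tangent_angle s))
                    (is_derive_tangent_angle s Hs)).
    assert (Hsn := is_derive_comp_R _ _ s _ _ (is_derive_sin (tangent_angle s))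
                    (is_derive_tangent_angle s Hs)).
    eapply is_derive_value; [|apply is_derive_plus_R; apply is_derive_sq_R;
      apply is_derive_minus_R; eauto using is_derive_utan_x, is_derive_utan_y].
    simpl. ring. }
  assert (Ha : h a = 0).
  { unfold h, tangent_angle. rewrite RInt_point, Rplus_0_r.
    destruct (cos_sin_angle_of (utan_x a) (utan_y a) (utan_sq a ltac:(lra))) as [-> ->]. ring. }
  assert (Hht : h t = 0).
  { destruct (Rle_dec a t).
    - rewrite (eq_of_derive_zero h a t) by (auto; intros; apply Hd; lra). auto.
    - rewrite <- (eq_of_derive_zero h t a) by (try lra; intros; apply Hd; lra). auto. }
  unfold h in Hht. rewrite <- !Rsqr_pow2 in Hht.
  destruct (Rplus_sqr_eq_0 _ _ Hht). split; lra.
Qed.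

Lemma dx_polar t : a0 < t < b0 -> dx t = speed dx dy t * cos (tangent_angle t).
Proof.
  intros Ht. rewrite <- (proj1 (utan_polar t Ht)). unfold utan_x.
  pose proof (speed_pos t Ht). field. lra.
Qed.

Lemma dy_polar t : a0 < t < b0 -> dy t = speed dx dy t * sin (tangent_angle t).
Proof.
  intros Ht. rewrite <- (proj2 (utan_polar t Ht)). unfold utan_y.
  pose proof (speed_pos t Ht). field. lra.
Qed.

Lemma velocity_dot n1 n2 s : a0 < s < b0 ->
  n1 * dx s + n2 * dy s = speed dx dy s * ndot n1 n2 (tangent_angle s).
Proof. intros Hs. rewrite dx_polar, dy_polar by auto. unfold ndot. ring. Qed.

Lemma velocity_cross z w : a0 < z < b0 -> a0 < w < b0 ->
  dx z * dy w - dy z * dx w = speed dx dy z * speed dx dy w * sin (tangent_angle w - tangent_angle z).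
Proof. intros. rewrite (dx_polar z), (dy_polar z), (dx_polar w), (dy_polar w), sin_minus by auto. ring. Qed.

Lemma arclen_mono u v : a <= u -> u <= v -> v <= b -> arclen u <= arclen v.
Proof.
  intros H1 H2 H3.
  pose proof (increment_le_of_derive_le (fun _ => 0) arclen (fun _ => 0) (speed dx dy) u v H2
    (fun x _ => is_derive_const_R 0 x) (fun x Hx => is_derive_arclen x ltac:(lra))
    (fun x Hx => Rlt_le _ _ (speed_pos x ltac:(lra)))). lra.
Qed.

Lemma arclen_strict u v : a <= u -> u < v -> v <= b -> arclen u < arclen v.
Proof.
  intros H1 H2 H3.
  destruct (MVT_gen arclen u v (speed dx dy)) as [c [Hc E]]; rewrite ?Rmin_left, ?Rmax_right in * by lra.
  - intros x Hx. apply is_derive_arclen. lra.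
  - intros x Hx. apply continuity_pt_filterlim, (continuous_of_is_derive _ _ _ (is_derive_arclen x ltac:(lra))).
  - pose proof (speed_pos c ltac:(lra)). nra.
Qed.

Lemma chord_le_arclen s t : a <= s -> s <= t -> t <= b ->
  edist2 (arc_pt t) (arc_pt s) <= arclen t - arclen s.
Proof.
  intros H1 H2 H3. apply edist2_le_of_sqdist_le; [pose proof (arclen_mono s t); lra|].
  apply sqnorm_le_of_dot_le. intros n1 n2 Hn.
  pose proof (increment_le_of_derive_le (fun u => n1 * gx u + n2 * gy u + 0) arclen _ (speed dx dy) s t H2
     (fun u _ => is_derive_lincomb2 gx gy n1 n2 0 u _ _ (is_derive_gx u) (is_derive_gy u))
     (fun u Hu => is_derive_arclen u ltac:(lra))) as K.
  cbn [fst snd arc_pt].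
  enough (n1 * gx t + n2 * gy t + 0 - (n1 * gx s + n2 * gy s + 0) <= arclen t - arclen s) by lra.
  apply K. intros u Hu. rewrite velocity_dot by lra.
  pose proof (speed_pos u ltac:(lra)).
  pose proof (ndot_ncross_sq n1 n2 Hn (tangent_angle u)). pose proof (pow2_ge_0 (ncross n1 n2 (tangent_angle u))).
  assert (ndot n1 n2 (tangent_angle u) <= 1) by nra. nra.
Qed.

Variables R1 R2 : R.
Hypothesis R1_pos : 0 < R1.
Hypothesis curvature_pos : forall t, a <= t <= b -> 0 < curvature dx dy ddx ddy t.
Hypothesis radius_bounds : forall t, a <= t <= b -> R1 <= / curvature dx dy ddx ddy t <= R2.
Hypothesis total_turn_le_PI : RInt turning_rate a b <= PI.

Lemma turning_rate_eq t : a0 < t < b0 ->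
  turning_rate t = curvature dx dy ddx ddy t * speed dx dy t.
Proof.
  intros Ht. pose proof (speed_pos t Ht). pose proof (speed_sq t) as Hs.
  unfold turning_rate, curvature. rewrite <- Hs. field. lra.
Qed.

Lemma turning_rate_pos t : a <= t <= b -> 0 < turning_rate t.
Proof.
  intros Ht. rewrite turning_rate_eq by lra.
  apply Rmult_lt_0_compat; [auto|apply speed_pos; lra].
Qed.

Lemma R1_turning_rate_le_speed t : a <= t <= b -> R1 * turning_rate t <= speed dx dy t.
Proof.
  intros Ht. rewrite turning_rate_eq by lra.
  pose proof (curvature_pos t Ht). destruct (radius_bounds t Ht) as [H1 _].
  pose proof (speed_pos t ltac:(lra)).
  apply (Rmult_le_compat_r (curvature dx dy ddx ddy t)) in H1; [|lra].
  rewrite Rinv_l in H1 by lra. nra.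
Qed.

Lemma speed_le_R2_turning_rate t : a <= t <= b -> speed dx dy t <= R2 * turning_rate t.
Proof.
  intros Ht. rewrite turning_rate_eq by lra.
  pose proof (curvature_pos t Ht). destruct (radius_bounds t Ht) as [_ H2].
  pose proof (speed_pos t ltac:(lra)).
  apply (Rmult_le_compat_r (curvature dx dy ddx ddy t)) in H2; [|lra].
  rewrite Rinv_l in H2 by lra. nra.
Qed.

Lemma R2_pos : 0 < R2.
Proof.
  pose proof (radius_bounds a ltac:(lra)). pose proof (curvature_pos a ltac:(lra)).
  pose proof (Rinv_0_lt_compat _ H0). lra.
Qed.

Lemma tangent_angle_mono u v : a <= u -> u <= v -> v <= b -> tangent_angle u <= tangent_angle v.
Proof.
  intros H1 H2 H3.
  pose proof (increment_le_of_derive_le (fun _ => 0) tangent_angle (fun _ => 0) turning_rate u v H2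
    (fun x _ => is_derive_const_R 0 x) (fun x Hx => is_derive_tangent_angle x ltac:(lra))
    (fun x Hx => Rlt_le _ _ (turning_rate_pos x ltac:(lra)))). lra.
Qed.

Lemma tangent_angle_turn_le_PI u v : a <= u -> u <= v -> v <= b ->
  tangent_angle v - tangent_angle u <= PI.
Proof.
  intros. pose proof (tangent_angle_mono a u ltac:(lra) ltac:(lra) ltac:(lra)).
  pose proof (tangent_angle_mono v b ltac:(lra) ltac:(lra) ltac:(lra)).
  assert (tangent_angle b - tangent_angle a <= PI)
    by (unfold tangent_angle; rewrite RInt_point; unfold zero; simpl; lra).
  lra.
Qed.

Lemma R1_angle_le_arclen u v : a <= u -> u <= v -> v <= b ->
  R1 * (tangent_angle v - tangent_angle u) <= arclen v - arclen u.
Proof.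
  intros H1 H2 H3.
  pose proof (increment_le_of_derive_le (fun t => R1 * tangent_angle t) arclen
    (fun t => R1 * turning_rate t) (speed dx dy) u v H2
    (fun x Hx => is_derive_scal _ x R1 _ (is_derive_tangent_angle x ltac:(lra)))
    (fun x Hx => is_derive_arclen x ltac:(lra))
    (fun x Hx => R1_turning_rate_le_speed x ltac:(lra))). lra.
Qed.

(** Since [rho <= R2], the support function of the arc in direction [n] grows at
    most like [R2] times the integrated positive part of [n . T]. *)
Lemma support_increment_le n1 n2 u v : a <= u -> u <= v -> v <= b ->
  n1 * (gx v - gx u) + n2 * (gy v - gy u) <=
  R2 * RInt (fun x => pos_part (ndot n1 n2 x)) (tangent_angle u) (tangent_angle v).
Proof.
  intros H1 H2 H3.
  pose proof (increment_le_of_derive_le (fun s => n1 * gx s + n2 * gy s + 0)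
    (fun s => R2 * RInt (fun x => pos_part (ndot n1 n2 x)) (tangent_angle u) (tangent_angle s)) _
    (fun s => R2 * (pos_part (ndot n1 n2 (tangent_angle s)) * turning_rate s)) u v H2
    (fun s _ => is_derive_lincomb2 gx gy n1 n2 0 s _ _ (is_derive_gx s) (is_derive_gy s))
    (fun s Hs => is_derive_scal _ s R2 _ (is_derive_comp_R _ tangent_angle s _ _
        (is_derive_RInt_continuous _ _ _ (continuous_pos_ndot n1 n2))
        (is_derive_tangent_angle s ltac:(lra))))) as K.
  cbv beta in K. rewrite RInt_point in K. unfold zero in K; simpl in K.
  enough (n1 * gx v + n2 * gy v + 0 - (n1 * gx u + n2 * gy u + 0) <=
    R2 * RInt (fun x => pos_part (ndot n1 n2 x)) (tangent_angle u) (tangent_angle v) - R2 * 0)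
    by lra.
  apply K. intros s Hs. rewrite velocity_dot by lra.
  pose proof (speed_pos s ltac:(lra)). pose proof (speed_le_R2_turning_rate s ltac:(lra)).
  pose proof (pos_part_ge (ndot n1 n2 (tangent_angle s))).
  pose proof (pos_part_ge0 (ndot n1 n2 (tangent_angle s))).
  assert (speed dx dy s * ndot n1 n2 (tangent_angle s) <=
          speed dx dy s * pos_part (ndot n1 n2 (tangent_angle s))) by (apply Rmult_le_compat_l; lra).
  assert (speed dx dy s * pos_part (ndot n1 n2 (tangent_angle s)) <=
          R2 * turning_rate s * pos_part (ndot n1 n2 (tangent_angle s))) by (apply Rmult_le_compat_r; lra).
  lra.
Qed.

(** The centre of the circle of radius [R2] tangent to the arc at [arc_pt tm] on its
    concave side. *)
Definition inner_center (tm : R) : R * R :=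
  (gx tm - R2 * sin (tangent_angle tm), gy tm + R2 * cos (tangent_angle tm)).

Lemma sqdist_arc_inner_center tm : sqdist (arc_pt tm) (inner_center tm) = R2 ^ 2.
Proof.
  unfold sqdist, arc_pt, inner_center; cbn [fst snd].
  pose proof (sin2_cos2 (tangent_angle tm)) as H. unfold Rsqr in H.
  transitivity (R2 ^ 2 * (sin (tangent_angle tm) * sin (tangent_angle tm)
                          + cos (tangent_angle tm) * cos (tangent_angle tm))); [ring|].
  rewrite H. ring.
Qed.

(** Blaschke's rolling disk theorem, for arcs turning by at most [PI]. *)
Lemma arc_in_inner_disk tm t : a <= tm <= b -> a <= t <= b ->
  sqdist (arc_pt t) (inner_center tm) <= R2 ^ 2.
Proof.
  intros Hm Ht. apply sqnorm_le_of_dot_le. intros n1 n2 Hn.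
  pose proof R2_pos.
  enough (n1 * (gx t - gx tm) + n2 * (gy t - gy tm) <= R2 * (1 - ncross n1 n2 (tangent_angle tm)))
    by (unfold arc_pt, inner_center, ncross in *; cbn [fst snd]; lra).
  destruct (Rle_dec tm t) as [Hle|Hle].
  - pose proof (support_increment_le n1 n2 tm t ltac:(lra) Hle ltac:(lra)) as Hs.
    pose proof (tangent_angle_mono tm t ltac:(lra) Hle ltac:(lra)).
    pose proof (tangent_angle_turn_le_PI tm t ltac:(lra) Hle ltac:(lra)).
    pose proof (RInt_pos_ndot_le n1 n2 (tangent_angle tm) (tangent_angle tm) (tangent_angle t)
      (tangent_angle tm + PI) ltac:(lra) ltac:(lra) ltac:(lra)) as Hsub.
    pose proof (RInt_pos_ndot_half_turn n1 n2 Hn (tangent_angle tm)) as Hh.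
    apply Rmult_le_compat_l with (r := R2) in Hsub, Hh; lra.
  - pose proof (support_increment_le (- n1) (- n2) t tm ltac:(lra) ltac:(lra) ltac:(lra)) as Hs.
    pose proof (tangent_angle_mono t tm ltac:(lra) ltac:(lra) ltac:(lra)).
    pose proof (tangent_angle_turn_le_PI t tm ltac:(lra) ltac:(lra) ltac:(lra)).
    pose proof (RInt_pos_ndot_le (- n1) (- n2) (tangent_angle tm - PI) (tangent_angle t)
      (tangent_angle tm) (tangent_angle tm) ltac:(lra) ltac:(lra) ltac:(lra)) as Hsub.
    pose proof (RInt_pos_ndot_half_turn (- n1) (- n2) ltac:(lra) (tangent_angle tm - PI)) as Hh.
    replace (tangent_angle tm - PI + PI) with (tangent_angle tm) in Hh by ring.
    assert (Hc : ncross (- n1) (- n2) (tangent_angle tm - PI) = ncross n1 n2 (tangent_angle tm))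
      by (unfold ncross; rewrite sin_minus, cos_minus, sin_PI, cos_PI; ring).
    rewrite Hc in Hh. apply Rmult_le_compat_l with (r := R2) in Hsub, Hh; lra.
Qed.

Lemma is_derive_chord_velocity_cross t2 w z :
  is_derive (fun z => (gx t2 - gx z) * dy w - (gy t2 - gy z) * dx w) z
    (- (dx z * dy w - dy z * dx w)).
Proof.
  apply (is_derive_ext (fun z => (- dy w) * gx z + dx w * gy z + (gx t2 * dy w - gy t2 * dx w)));
    [intros; simpl; ring|].
  eapply is_derive_value; [|apply is_derive_lincomb2; [apply is_derive_gx|apply is_derive_gy]].
  ring.
Qed.

Lemma chord_velocity_cross_nonneg t1 t2 w : a <= t1 -> t1 <= t2 -> t2 <= w -> w <= b ->
  0 <= (gx t2 - gx t1) * dy w - (gy t2 - gy t1) * dx w.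
Proof.
  intros H1 H2 H3 H4.
  pose proof (increment_le_of_derive_le _ (fun _ => 0) _ (fun _ => 0) t1 t2 H2
    (fun z _ => is_derive_chord_velocity_cross t2 w z) (fun z _ => is_derive_const_R 0 z)) as K.
  cbv beta in K. replace (gx t2 - gx t2) with 0 in K by ring. replace (gy t2 - gy t2) with 0 in K by ring.
  enough (0 * dy w - 0 * dx w - ((gx t2 - gx t1) * dy w - (gy t2 - gy t1) * dx w) <= 0 - 0) by lra.
  apply K. intros z Hz. rewrite velocity_cross by lra.
  pose proof (speed_pos z ltac:(lra)). pose proof (speed_pos w ltac:(lra)).
  assert (Hs : 0 <= sin (tangent_angle w - tangent_angle z)).
  { apply sin_ge_0; [pose proof (tangent_angle_mono z w)|apply tangent_angle_turn_le_PI]; lra. }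
  assert (Hp : 0 <= speed dx dy z * speed dx dy w) by (apply Rmult_le_pos; lra).
  pose proof (Rmult_le_pos _ _ Hp Hs). lra.
Qed.

(** Writing the cross product as [int_t1^t2 |g'(z)| |g'(w)| sin (theta w - theta z) dz],
    use [sin x <= x] and [R1 (theta w - theta z) <= s w - s z]. *)
Lemma chord_velocity_cross_le t1 t2 w : a <= t1 -> t1 <= t2 -> t2 <= w -> w <= b ->
  2 * R1 * ((gx t2 - gx t1) * dy w - (gy t2 - gy t1) * dx w) <=
  speed dx dy w * ((arclen w - arclen t1) ^ 2 - (arclen w - arclen t2) ^ 2).
Proof.
  intros H1 H2 H3 H4.
  set (c := speed dx dy w / (2 * R1)).
  assert (HG : forall z, t1 <= z <= t2 -> is_derive (fun z => c * (arclen w - arclen z) ^ 2) z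
                 (c * (2 * (arclen w - arclen z) * (0 - speed dx dy z)))).
  { intros z Hz. apply is_derive_scal, (is_derive_sq_R (fun z => arclen w - arclen z)).
    apply is_derive_minus_R; [apply is_derive_const_R|apply is_derive_arclen; lra]. }
  pose proof (increment_le_of_derive_le _ _ _ _ t1 t2 H2 HG
    (fun z _ => is_derive_chord_velocity_cross t2 w z)) as K.
  cbv beta in K. replace (gx t2 - gx t2) with 0 in K by ring. replace (gy t2 - gy t2) with 0 in K by ring.
  enough (Hk : c * (arclen w - arclen t2) ^ 2 - c * (arclen w - arclen t1) ^ 2 <=
          0 * dy w - 0 * dx w - ((gx t2 - gx t1) * dy w - (gy t2 - gy t1) * dx w)).
  { apply (Rmult_le_compat_l (2 * R1)) in Hk; [|lra]. unfold c in Hk.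
    replace (2 * R1 * (speed dx dy w / (2 * R1) * (arclen w - arclen t2) ^ 2
               - speed dx dy w / (2 * R1) * (arclen w - arclen t1) ^ 2))
      with (- (speed dx dy w * ((arclen w - arclen t1) ^ 2 - (arclen w - arclen t2) ^ 2))) in Hk
      by (field; lra).
    lra. }
  apply K. intros z Hz. rewrite velocity_cross by lra.
  pose proof (speed_pos z ltac:(lra)). pose proof (speed_pos w ltac:(lra)).
  pose proof (tangent_angle_mono z w ltac:(lra) ltac:(lra) ltac:(lra)).
  pose proof (sin_le_id (tangent_angle w - tangent_angle z) ltac:(lra)).
  pose proof (R1_angle_le_arclen z w ltac:(lra) ltac:(lra) ltac:(lra)).
  assert (R1 * sin (tangent_angle w - tangent_angle z) <= arclen w - arclen z) by nra.
  assert (speed dx dy z * speed dx dy w * (R1 * sin (tangent_angle w - tangent_angle z)) <=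
          speed dx dy z * speed dx dy w * (arclen w - arclen z))
    by (apply Rmult_le_compat_l; nra).
  apply (Rmult_le_reg_l R1); [lra|]. unfold c.
  replace (R1 * (speed dx dy w / (2 * R1) * (2 * (arclen w - arclen z) * (0 - speed dx dy z))))
    with (- (speed dx dy z * speed dx dy w * (arclen w - arclen z))) by (field; lra).
  lra.
Qed.

Lemma is_derive_cross3_arc t1 t2 w :
  is_derive (fun w => cross3 (arc_pt t1) (arc_pt t2) (arc_pt w)) w
    ((gx t2 - gx t1) * dy w - (gy t2 - gy t1) * dx w).
Proof.
  apply (is_derive_ext (fun w => (gx t2 - gx t1) * gy w + (- (gy t2 - gy t1)) * gx w
                                 + (- (gx t2 - gx t1) * gy t2 + (gy t2 - gy t1) * gx t2)));
    [intros; unfold cross3, arc_pt; simpl; ring|].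
  eapply is_derive_value; [|apply is_derive_lincomb2; [apply is_derive_gy|apply is_derive_gx]].
  ring.
Qed.

Lemma cross3_arc_start t1 t2 : cross3 (arc_pt t1) (arc_pt t2) (arc_pt t2) = 0.
Proof. unfold cross3. ring. Qed.

Lemma cross3_arc_nonneg t1 t2 t3 : a <= t1 -> t1 <= t2 -> t2 <= t3 -> t3 <= b ->
  0 <= cross3 (arc_pt t1) (arc_pt t2) (arc_pt t3).
Proof.
  intros H1 H2 H3 H4.
  pose proof (increment_le_of_derive_le (fun _ => 0) _ (fun _ => 0) _ t2 t3 H3
    (fun w _ => is_derive_const_R 0 w) (fun w _ => is_derive_cross3_arc t1 t2 w)
    (fun w Hw => chord_velocity_cross_nonneg t1 t2 w ltac:(lra) ltac:(lra) ltac:(lra) ltac:(lra)))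
    as K.
  cbv beta in K. rewrite cross3_arc_start in K. lra.
Qed.

Lemma cross3_arc_le t1 t2 t3 : a <= t1 -> t1 <= t2 -> t2 <= t3 -> t3 <= b ->
  2 * R1 * cross3 (arc_pt t1) (arc_pt t2) (arc_pt t3) <=
  (arclen t2 - arclen t1) * (arclen t3 - arclen t2) * (arclen t3 - arclen t1).
Proof.
  intros H1 H2 H3 H4.
  set (s1 := arclen t1). set (s2 := arclen t2).
  assert (HH : forall w, t2 <= w <= t3 ->
    is_derive (fun w => (s2 - s1) / (2 * R1) * ((arclen w - s1) * (arclen w - s2))) w
      ((s2 - s1) / (2 * R1) * ((speed dx dy w - 0) * (arclen w - s2) + (arclen w - s1) * (speed dx dy w - 0)))).
  { intros w Hw.
    apply is_derive_scal, (is_derive_mult_R (fun w => arclen w - s1) (fun w => arclen w - s2));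
      apply is_derive_minus_R; (apply is_derive_arclen; lra) || apply is_derive_const_R. }
  pose proof (increment_le_of_derive_le _ _ _ _ t2 t3 H3 (fun w _ => is_derive_cross3_arc t1 t2 w) HH) as K.
  cbv beta in K. rewrite cross3_arc_start in K.
  assert (Hle : cross3 (arc_pt t1) (arc_pt t2) (arc_pt t3) - 0 <=
    (s2 - s1) / (2 * R1) * ((arclen t3 - s1) * (arclen t3 - s2)) -
    (s2 - s1) / (2 * R1) * ((s2 - s1) * (s2 - s2))).
  { apply K. intros w Hw.
    pose proof (chord_velocity_cross_le t1 t2 w ltac:(lra) ltac:(lra) ltac:(lra) ltac:(lra)) as C.
    apply (Rmult_le_reg_l (2 * R1)); [lra|].
    replace (2 * R1 * ((s2 - s1) / (2 * R1) *
      ((speed dx dy w - 0) * (arclen w - s2) + (arclen w - s1) * (speed dx dy w - 0))))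
      with (speed dx dy w * ((arclen w - arclen t1) ^ 2 - (arclen w - arclen t2) ^ 2))
      by (unfold s1, s2; field; lra).
    exact C. }
  apply (Rmult_le_compat_l (2 * R1)) in Hle; [|lra].
  replace (2 * R1 * ((s2 - s1) / (2 * R1) * ((arclen t3 - s1) * (arclen t3 - s2)) -
    (s2 - s1) / (2 * R1) * ((s2 - s1) * (s2 - s2))))
    with ((s2 - s1) * (arclen t3 - s2) * (arclen t3 - s1)) in Hle by (field; lra).
  lra.
Qed.

Lemma edist2_arc_inner_center tm : edist2 (arc_pt tm) (inner_center tm) = R2.
Proof. rewrite edist2_sqdist, sqdist_arc_inner_center. apply sqrt_pow2. pose proof R2_pos. lra. Qed.

Lemma near_arc_in_inner_disk tm t X dl : a <= tm <= b -> a <= t <= b ->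
  edist2 (arc_pt t) X < dl -> sqdist X (inner_center tm) < (R2 + dl) ^ 2.
Proof.
  intros Hm Ht HX. apply sqdist_lt_of_edist2_lt.
  pose proof (edist2_le_of_sqdist_le _ _ _ (Rlt_le _ _ R2_pos) (arc_in_inner_disk tm t Hm Ht)).
  pose proof (edist2_triangle X (arc_pt t) (inner_center tm)).
  rewrite (edist2_sym X (arc_pt t)) in *. lra.
Qed.

Lemma arc_triangle_perimeter_le t1 t2 t3 : a <= t1 -> t1 <= t2 -> t2 <= t3 -> t3 <= b ->
  edist2 (arc_pt t2) (arc_pt t3) + edist2 (arc_pt t3) (arc_pt t1) + edist2 (arc_pt t1) (arc_pt t2)
  <= 2 * (arclen t3 - arclen t1).
Proof.
  intros. rewrite (edist2_sym (arc_pt t2)), (edist2_sym (arc_pt t1) (arc_pt t2)).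
  pose proof (chord_le_arclen t2 t3). pose proof (chord_le_arclen t1 t3).
  pose proof (chord_le_arclen t1 t2). lra.
Qed.

Lemma arclen_inj u v : a <= u <= b -> a <= v <= b -> arclen u = arclen v -> u = v.
Proof.
  intros Hu Hv E. destruct (Rtotal_order u v) as [H|[H|H]]; auto;
    [pose proof (arclen_strict u v)|pose proof (arclen_strict v u)]; lra.
Qed.

Section LatticeNearArc.

Variables (v0 v1 v2 : R * R) (dl d : R).
Hypothesis lattice_sep : forall P Q, in_lattice v0 v1 v2 P -> in_lattice v0 v1 v2 Q -> P <> Q ->
  d <= edist2 P Q.
Hypothesis d_nonneg : 0 <= d.
Hypothesis dl_pos : 0 < dl.
Hypothesis dl_small : 4 * R2 * dl + 2 * d * dl < d ^ 2.

(** The middle one of three collinear points near the arc lies near the boundary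
    circle of the inner disk, and the outer ones at distance [>= d] on both sides
    of it: one of them leaves the disk enlarged by [dl]. *)
Lemma collinear_near_arc_absurd (tm te tf : R) (E M F : R * R) :
  a <= tm <= b -> a <= te <= b -> a <= tf <= b ->
  edist2 (arc_pt tm) M < dl -> edist2 (arc_pt te) E < dl -> edist2 (arc_pt tf) F < dl ->
  strictly_between E M F -> d <= edist2 E M -> d <= edist2 F M -> False.
Proof.
  intros Hm He Hf DM DE DF Hb HdE HdF.
  assert (Hmc : R2 - dl < edist2 M (inner_center tm)).
  { pose proof (edist2_triangle (arc_pt tm) M (inner_center tm)).
    pose proof (edist2_arc_inner_center tm). lra. }
  assert (Hsq : forall X, d <= edist2 X M -> d ^ 2 <= sqdist X M).
  { intros X HX. rewrite <- edist2_sq. apply pow_incr. lra. }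
  pose proof R2_pos. pose proof (edist2_ge0 M (inner_center tm)).
  destruct (strictly_between_obtuse E M F (inner_center tm) Hb) as [HX|HX];
    rewrite <- (edist2_sq M) in HX.
  - pose proof (Hsq E HdE). pose proof (near_arc_in_inner_disk tm te E dl Hm He DE).
    apply (near_circle_absurd R2 dl d (edist2 M (inner_center tm)) (sqdist E (inner_center tm)));
      lra.
  - pose proof (Hsq F HdF). pose proof (near_arc_in_inner_disk tm tf F dl Hm Hf DF).
    apply (near_circle_absurd R2 dl d (edist2 M (inner_center tm)) (sqdist F (inner_center tm)));
      lra.
Qed.

Lemma near_arc_lattice_not_collinear (t1 t2 t3 : R) (Q1 Q2 Q3 : R * R) :
  a <= t1 <= b -> a <= t2 <= b -> a <= t3 <= b ->
  Q1 <> Q2 -> Q2 <> Q3 -> Q1 <> Q3 ->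
  edist2 (arc_pt t1) Q1 < dl -> edist2 (arc_pt t2) Q2 < dl -> edist2 (arc_pt t3) Q3 < dl ->
  in_lattice v0 v1 v2 Q1 -> in_lattice v0 v1 v2 Q2 -> in_lattice v0 v1 v2 Q3 ->
  cross3 Q1 Q2 Q3 <> 0.
Proof.
  intros H1 H2 H3 N12 N23 N13 D1 D2 D3 L1 L2 L3 Hc.
  destruct (collinear_strictly_between Q1 Q2 Q3 N12 N23 N13 Hc) as [Hb|[Hb|Hb]].
  - apply (collinear_near_arc_absurd t1 t2 t3 Q2 Q1 Q3); auto.
  - apply (collinear_near_arc_absurd t2 t1 t3 Q1 Q2 Q3); auto.
  - apply (collinear_near_arc_absurd t3 t1 t2 Q1 Q3 Q2); auto.
Qed.

Lemma near_arc_lattice_triple_spread (t1 t2 t3 : R) (Q1 Q2 Q3 : R * R) :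
  a <= t1 -> t1 < t2 -> t2 < t3 -> t3 <= b ->
  Q1 <> Q2 -> Q2 <> Q3 -> Q1 <> Q3 ->
  edist2 (arc_pt t1) Q1 < dl -> edist2 (arc_pt t2) Q2 < dl -> edist2 (arc_pt t3) Q3 < dl ->
  in_lattice v0 v1 v2 Q1 -> in_lattice v0 v1 v2 Q2 -> in_lattice v0 v1 v2 Q3 ->
  8 * (R1 * (lattice_area v1 v2 - 2 * (arclen b - arclen a) * dl - 3 * dl ^ 2))
  <= (arclen t3 - arclen t1) ^ 3.
Proof.
  intros H1 H12 H23 H3 N12 N23 N13 D1 D2 D3 L1 L2 L3.
  assert (HA : lattice_area v1 v2 <= Rabs (cross3 Q1 Q2 Q3)).
  { destruct (lattice_cross3_cases v0 v1 v2 Q1 Q2 Q3 L1 L2 L3) as [Hc|Hc]; [|exact Hc].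
    exfalso. refine (near_arc_lattice_not_collinear t1 t2 t3 Q1 Q2 Q3
      _ _ _ N12 N23 N13 D1 D2 D3 L1 L2 L3 Hc); lra. }
  assert (Hsq : forall t Q, edist2 (arc_pt t) Q < dl -> sqdist Q (arc_pt t) <= dl ^ 2)
    by (intros t Q HQ; rewrite sqdist_sym; apply Rlt_le, sqdist_lt_of_edist2_lt, HQ).
  pose proof (cross3_perturb (arc_pt t1) (arc_pt t2) (arc_pt t3) Q1 Q2 Q3 dl
    (Hsq _ _ D1) (Hsq _ _ D2) (Hsq _ _ D3) ltac:(lra)) as Hpert.
  pose proof (arc_triangle_perimeter_le t1 t2 t3 ltac:(lra) ltac:(lra) ltac:(lra) ltac:(lra)).
  pose proof (arclen_mono a t1 ltac:(lra) ltac:(lra) ltac:(lra)).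
  pose proof (arclen_mono t3 b ltac:(lra) ltac:(lra) ltac:(lra)).
  pose proof (arclen_mono t1 t2 ltac:(lra) ltac:(lra) ltac:(lra)).
  pose proof (arclen_mono t2 t3 ltac:(lra) ltac:(lra) ltac:(lra)).
  pose proof (cross3_arc_nonneg t1 t2 t3 ltac:(lra) ltac:(lra) ltac:(lra) ltac:(lra)) as Hpos.
  pose proof (cross3_arc_le t1 t2 t3 ltac:(lra) ltac:(lra) ltac:(lra) ltac:(lra)) as Hup.
  set (P := cross3 (arc_pt t1) (arc_pt t2) (arc_pt t3)) in *.
  set (Y := lattice_area v1 v2 - 2 * (arclen b - arclen a) * dl - 3 * dl ^ 2).
  assert (HY : Y <= P).
  { pose proof (Rabs_triang_inv (cross3 Q1 Q2 Q3) P). rewrite (Rabs_right P) in * by lra.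
    assert (dl * (edist2 (arc_pt t2) (arc_pt t3) + edist2 (arc_pt t3) (arc_pt t1)
                  + edist2 (arc_pt t1) (arc_pt t2)) <= dl * (2 * (arclen b - arclen a)))
      by (apply Rmult_le_compat_l; lra).
    unfold Y. lra. }
  assert (2 * R1 * Y <= 2 * R1 * P) by (apply Rmult_le_compat_l; lra).
  pose proof (four_mul_le_cube (arclen t2 - arclen t1) (arclen t3 - arclen t2) ltac:(lra) ltac:(lra)).
  replace (arclen t2 - arclen t1 + (arclen t3 - arclen t2)) with (arclen t3 - arclen t1) in * by ring.
  lra.
Qed.

Variables (pts : list (R * R)) (par : R * R -> R).
Hypothesis pts_near : forall Q, In Q pts ->
  in_lattice v0 v1 v2 Q /\ a <= par Q <= b /\ edist2 (arc_pt (par Q)) Q < dl.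

Lemma arclen_par_inj Q Q' : In Q pts -> In Q' pts -> arclen (par Q) = arclen (par Q') -> Q = Q'.
Proof.
  intros HQ HQ' E.
  destruct (pts_near Q HQ) as [LQ [T D]]. destruct (pts_near Q' HQ') as [LQ' [T' D']].
  rewrite (arclen_inj _ _ T T' E) in D.
  apply (near_same_point_eq Q Q' (arc_pt (par Q')) dl d); auto.
  pose proof R2_pos. nra.
Qed.

Lemma arclen_par_triple_spread :
  0 < lattice_area v1 v2 - 2 * (arclen b - arclen a) * dl - 3 * dl ^ 2 ->
  triple_spread (Rpower (R1 * (lattice_area v1 v2 - 2 * (arclen b - arclen a) * dl - 3 * dl ^ 2))
    (1 / 3)) (map (fun Q => arclen (par Q)) pts).
Proof.
  intros HY x y z Hx Hy Hz Hxy Hyz.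
  apply in_map_iff in Hx, Hy, Hz.
  destruct Hx as [Q1 [<- I1]], Hy as [Q2 [<- I2]], Hz as [Q3 [<- I3]].
  destruct (pts_near Q1 I1) as [L1 [T1 D1]], (pts_near Q2 I2) as [L2 [T2 D2]],
    (pts_near Q3 I3) as [L3 [T3 D3]].
  assert (Hlt : forall Q Q', a <= par Q <= b -> a <= par Q' <= b ->
                arclen (par Q) < arclen (par Q') -> par Q < par Q' /\ Q <> Q').
  { intros Q Q' TQ TQ' Hs. split.
    - apply Rnot_le_lt. intros Hle. pose proof (arclen_mono (par Q') (par Q)). lra.
    - intros ->. lra. }
  destruct (Hlt Q1 Q2 T1 T2 Hxy) as [P12 N12], (Hlt Q2 Q3 T2 T3 Hyz) as [P23 N23],
    (Hlt Q1 Q3 T1 T3 ltac:(lra)) as [_ N13].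
  pose proof (near_arc_lattice_triple_spread (par Q1) (par Q2) (par Q3) Q1 Q2 Q3
    ltac:(lra) P12 P23 ltac:(lra) N12 N23 N13 D1 D2 D3 L1 L2 L3) as Hcube.
  set (Y := lattice_area v1 v2 - 2 * (arclen b - arclen a) * dl - 3 * dl ^ 2) in *.
  set (X := Rpower (R1 * Y) (1 / 3)).
  assert (HX : 0 < X) by apply exp_pos.
  assert (HX3 : X ^ 3 = R1 * Y) by (apply Rpower_third_cube; nra).
  apply le_of_cube_le; [lra|lra|].
  replace ((2 * X) ^ 3) with (8 * X ^ 3) by ring. rewrite HX3. exact Hcube.
Qed.

End LatticeNearArc.

Lemma near_arc_lattice_count (v0 v1 v2 : R * R) (dl d : R) (pts : list (R * R)) :
  (forall P Q, in_lattice v0 v1 v2 P -> in_lattice v0 v1 v2 Q -> P <> Q -> d <= edist2 P Q) ->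
  0 <= d -> 0 < dl -> 4 * R2 * dl + 2 * d * dl < d ^ 2 ->
  0 < lattice_area v1 v2 - 2 * (arclen b - arclen a) * dl - 3 * dl ^ 2 ->
  NoDup pts ->
  (forall Q, In Q pts ->
     in_lattice v0 v1 v2 Q /\ exists t, a <= t <= b /\ edist2 (arc_pt t) Q < dl) ->
  INR (length pts) < 2 + (arclen b - arclen a) /
    Rpower (R1 * (lattice_area v1 v2 - 2 * (arclen b - arclen a) * dl - 3 * dl ^ 2)) (1 / 3).
Proof.
  intros Hsep Hd0 Hdl Hsmall HY Hnd Hpts.
  destruct (choice (fun Q t => In Q pts -> a <= t <= b /\ edist2 (arc_pt t) Q < dl)) as [par Hpar].
  { intros Q. destruct (classic (In Q pts)) as [HQ|HQ].
    - destruct (proj2 (Hpts Q HQ)) as [t Ht]. exists t. auto.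
    - exists a. tauto. }
  assert (Hnear : forall Q, In Q pts ->
    in_lattice v0 v1 v2 Q /\ a <= par Q <= b /\ edist2 (arc_pt (par Q)) Q < dl)
    by (intros Q HQ; split; [apply Hpts|apply Hpar]; auto).
  rewrite <- (length_map (fun Q => arclen (par Q))).
  apply (length_lt_of_triple_spread _ _ (exp_pos _) _ (arclen a)).
  - apply arclen_mono; lra.
  - apply NoDup_map_NoDup_ForallPairs; [|exact Hnd].
    intros Q Q' HQ HQ'. apply (arclen_par_inj v0 v1 v2 dl d Hsep Hd0 Hdl Hsmall pts par); auto.
  - intros x Hx. apply in_map_iff in Hx. destruct Hx as [Q [<- HQ]].
    destruct (Hnear Q HQ) as [_ [T _]]. split; apply arclen_mono; lra.
  - exact (arclen_par_triple_spread v0 v1 v2 dl d Hsep Hd0 Hdl Hsmall pts par Hnear HY).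
Qed.

End PlaneCurve.

Lemma Glb_Rbar_nonneg (E : R -> Prop) : (forall x, E x -> 0 <= x) ->
  0 <= real (Glb_Rbar E) /\ (forall x, E x -> real (Glb_Rbar E) <= x).
Proof.
  intros Hpos. destruct (Glb_Rbar_correct E) as [Hlb Hgr].
  assert (H0 : Rbar_le 0 (Glb_Rbar E)) by (apply Hgr; intros x Hx; simpl; auto).
  destruct (Glb_Rbar E) as [r| |]; simpl in *; [|split; [lra|]|contradiction].
  - split; [lra|]. intros x Hx. exact (Hlb x Hx).
  - exact Hpos.
Qed.

Lemma Glb_Rbar_nonneg_lt (E : R -> Prop) (dl : R) : (forall x, E x -> 0 <= x) -> (exists x, E x) ->
  real (Glb_Rbar E) < dl -> exists x, E x /\ x < dl.
Proof.
  intros Hpos [x0 Hx0] Hlt. apply NNPP. intros Hn.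
  destruct (Glb_Rbar_correct E) as [Hlb Hgr].
  assert (H1 : Rbar_le dl (Glb_Rbar E)).
  { apply Hgr. intros x Hx. simpl. apply Rnot_lt_le. intros Hxd. apply Hn. eauto. }
  specialize (Hlb x0 Hx0).
  destruct (Glb_Rbar E) as [r| |]; simpl in *; [lra|contradiction|contradiction].
Qed.

Lemma lattice_mindist_spec (v0 v1 v2 : R * R) :
  0 <= lattice_mindist v0 v1 v2 /\
  forall P Q, in_lattice v0 v1 v2 P -> in_lattice v0 v1 v2 Q -> P <> Q ->
    lattice_mindist v0 v1 v2 <= edist2 P Q.
Proof.
  destruct (Glb_Rbar_nonneg (fun r => exists P Q, in_lattice v0 v1 v2 P /\
     in_lattice v0 v1 v2 Q /\ P <> Q /\ r = edist2 P Q)) as [H0 Hle].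
  - intros x [P [Q [_ [_ [_ ->]]]]]. apply edist2_ge0.
  - split; [exact H0|]. intros P Q HP HQ HPQ. apply Hle. exists P, Q. auto.
Qed.

Lemma dist_curve_lt (a b : R) (gx gy : R -> R) (Q : R * R) (dl : R) : a <= b ->
  dist_curve a b gx gy Q < dl -> exists t, a <= t <= b /\ edist2 (gx t, gy t) Q < dl.
Proof.
  intros Hab H.
  destruct (Glb_Rbar_nonneg_lt (fun r => exists t, a <= t <= b /\ r = edist2 (gx t, gy t) Q) dl)
    as [r [[t [Ht ->]] Hr]]; eauto.
  - intros x [t [_ ->]]. apply edist2_ge0.
  - exists (edist2 (gx a, gy a) Q), a. split; [lra|auto].
Qed.

Lemma continuous_pos_near (f : R -> R) (t0 : R) : continuous f t0 -> 0 < f t0 ->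
  exists eps : posreal, forall t, Rabs (t - t0) < eps -> 0 < f t.
Proof.
  intros Hc Hpos.
  destruct (Hc _ (locally_of_open_interval (fun y => 0 < y) 0 (f t0 + 1) (f t0)
    ltac:(lra) (fun y Hy => proj1 Hy))) as [eps Heps].
  exists eps. intros t Ht. apply Heps, Ht.
Qed.

Lemma regular_near_interval (a b : R) (gx gy dx dy ddx ddy : R -> R) :
  is_C2_curve gx gy dx dy ddx ddy -> a < b ->
  (forall t, a <= t <= b -> (dx t, dy t) <> (0, 0)) ->
  exists a0 b0, a0 < a /\ b < b0 /\ forall t, a0 < t < b0 -> 0 < dx t ^ 2 + dy t ^ 2.
Proof.
  intros HC2 Hab Hnz.
  assert (Pos : forall t, a <= t <= b -> 0 < dx t ^ 2 + dy t ^ 2).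
  { intros t Ht. pose proof (sqdist_pos _ _ (Hnz t Ht)) as H. unfold sqdist in H; cbn [fst snd] in H.
    rewrite !Rminus_0_r in H. exact H. }
  assert (Near : forall t0, a <= t0 <= b ->
    exists eps : posreal, forall t, Rabs (t - t0) < eps -> 0 < dx t ^ 2 + dy t ^ 2).
  { intros t0 Ht0. apply (continuous_pos_near (fun t => dx t ^ 2 + dy t ^ 2)); [|auto].
    exact (continuous_of_is_derive _ _ _ (is_derive_speed_sq gx gy dx dy ddx ddy HC2 t0)). }
  destruct (Near a ltac:(lra)) as [e1 He1]. destruct (Near b ltac:(lra)) as [e2 He2].
  pose proof (cond_pos e1). pose proof (cond_pos e2).
  exists (a - e1 / 2), (b + e2 / 2). split; [lra|split; [lra|]].
  intros t Ht. destruct (Rle_dec a t), (Rle_dec t b).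
  - apply Pos; lra.
  - apply He2. rewrite Rabs_right; lra.
  - apply He1. rewrite Rabs_left; lra.
  - lra.
Qed.

Lemma small_delta_bound (R2 d dl : R) : 0 < R2 -> 0 <= d ->
  dl < d ^ 2 / (2 * (R2 + d + sqrt ((R2 + d) ^ 2 - d ^ 2))) ->
  4 * R2 * dl + 2 * d * dl < d ^ 2.
Proof.
  intros HR2 Hd Hdl.
  set (S := sqrt ((R2 + d) ^ 2 - d ^ 2)) in *.
  assert (HS : R2 <= S).
  { unfold S. rewrite <- (sqrt_pow2 R2) at 1 by lra. apply sqrt_le_1_alt.
    pose proof (Rmult_le_pos R2 d ltac:(lra) Hd). nra. }
  apply (Rmult_lt_compat_r (2 * (R2 + d + S))) in Hdl; [|lra].
  unfold Rdiv in Hdl. rewrite Rmult_assoc, Rinv_l in Hdl by lra. nra.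
Qed.

Theorem theorem7p7
  (a b : R) (gx gy dx dy ddx ddy : R -> R) (R1 R2 : R)
  (v0 v1 v2 : R * R) (delta : R) :
  convex_arc a b gx gy dx dy ddx ddy ->
  total_curvature a b dx dy ddx ddy <= PI ->
  0 < R1 -> R1 <= R2 ->
  (forall t, a <= t <= b ->
     R1 <= / curvature dx dy ddx ddy t <= R2) ->
  lin_indep2 v1 v2 ->
  let L := arc_length a b dx dy in
  let A := lattice_area v1 v2 in
  let d := lattice_mindist v0 v1 v2 in
  0 < delta ->
  delta < d ^ 2 / (2 * (R2 + d + sqrt ((R2 + d) ^ 2 - d ^ 2))) ->
  A / 2 - L * delta - 3 / 2 * delta ^ 2 > 0 ->
  forall pts : list (R * R),
    NoDup pts ->
    (forall Q, In Q pts ->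
       in_lattice v0 v1 v2 Q /\ dist_curve a b gx gy Q < delta) ->
    INR (length pts) <
      2 + L / Rpower (R1 * (A - 2 * L * delta - 3 * delta ^ 2)) (1 / 3).
Proof.
  intros Hconv Htc HR1 HR12 Hrho _ L A d Hdl Hdb HA pts Hnd Hpts.
  destruct Hconv as [Hab [HC2 [Hreg [_ [Hcv _]]]]].
  destruct (regular_near_interval a b gx gy dx dy ddx ddy HC2 Hab Hreg)
    as [a0 [b0 [Ha0 [Hb0 Hnz]]]].
  assert (Htot : RInt (turning_rate dx dy ddx ddy) a b <= PI).
  { unfold total_curvature in Htc.
    rewrite (RInt_ext _ (fun t => curvature dx dy ddx ddy t * speed dx dy t)); [lra|].
    rewrite Rmin_left, Rmax_right by lra. intros t Ht.
    apply (turning_rate_eq a0 b0); auto. lra. }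
  assert (HL : L = arclen a dx dy b - arclen a dx dy a)
    by (unfold L, arc_length, arclen; rewrite RInt_point; symmetry; apply Rminus_0_r).
  destruct (lattice_mindist_spec v0 v1 v2) as [Hd0 Hdist].
  rewrite HL in *.
  apply (near_arc_lattice_count a b a0 b0 gx gy dx dy ddx ddy Ha0 Hab Hb0 HC2 Hnz R1 R2
    HR1 Hcv Hrho Htot v0 v1 v2 delta d pts Hdist Hd0 Hdl); auto.
  - apply small_delta_bound; auto. lra.
  - unfold A in HA. lra.
  - intros Q HQ. destruct (Hpts Q HQ) as [HQl HQd]. split; [auto|].
    apply dist_curve_lt; [lra|auto].
Qed.
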